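(* Let $m$ be a probability measure on $\Sigma\times\Sigma\times\mathbb{P}(\mathbb{R}^m)$ which is stationary for the kernel $\bar K$. Then there exists a unique $\eta\in\mathrm{Prob}(\Sigma\times\mathbb{P}(\mathbb{R}^m))$ such that $m=K\ltimes\eta$, that is, for every $\psi\in C(\Sigma\times\Sigma\times\mathbb{P}(\mathbb{R}^m))$, $$\int \psi(\omega_1,\omega_0,\hat v)\,dm(\omega_1,\omega_0,\hat v)=\int\!\!\int \psi(\omega_1,\omega_0,\hat v)\,dK_{\omega_0}(\omega_1)\,d\eta(\omega_0,\hat v).$$ Moreover, $\eta$ is stationary for the kernel $K_A$.
   Context: $\Sigma$ is a compact metric space, $K\colon\Sigma\to\mathrm{Prob}(\Sigma)$ is a continuous (weak* ) uniformly ergodic Markov kernel, i.e. there are $\mu\in\mathrm{Prob}(\Sigma)$, $C<\infty$, $\sigma\in(0,1)$ with $\|K^n_x-\mu\|_{TV}\le C\sigma^n$ for all $x,n$. $A\colon\Sigma\times\Sigma\to\mathrm{GL}_m(\mathbb{R})$ is a measurable fiber map. $\mathbb{P}(\mathbb{R}^m)$ is real projective space; $\hat v$ is the projective point of $v\ne0$ and $\hat A(y,x)\hat v$ is the projective point of $A(y,x)v$. The kernel $\bar K$ on $\Sigma\times\Sigma\times\mathbb{P}(\mathbb{R}^m)$ is $\bar K(\omega_1,\omega_0,\hat v)=K_{\omega_1}\times\delta_{(\omega_1,\hat A(\omega_1,\omega_0)\hat v)}$, i.e. the law of $(\omega_2,\omega_1,\hat A(\omega_1,\omega_0)\hat v)$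 with $\omega_2\sim K_{\omega_1}$. The kernel $K_A$ on $\Sigma\times\mathbb{P}(\mathbb{R}^m)$ assigns to $(\omega_0,\hat v)$ the law of $(\omega_1,\hat A(\omega_1,\omega_0)\hat v)$ with $\omega_1\sim K_{\omega_0}$. A probability $\nu$ is stationary for a kernel $P$ if $\nu(E)=\int P(z)(E)\,d\nu(z)$ for all Borel $E$. *)

From HB Require Import structures.
From mathcomp Require Import all_boot all_order all_algebra generic_quotient.
From mathcomp Require Import all_classical all_reals all_analysis.
From mathcomp Require Import quotient_topology subtype_topology matrix_topology.
Import numFieldTopology.Exports.

Set Implicit Arguments.
Unset Strict Implicit.
Unset Printing Implicit Defensive.

Import Order.TTheory GRing.Theory Num.Theory.
Local Open Scope classical_set_scope.
Local Open Scope ring_scope.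

(** Pointed metric spaces (metric space + a distinguished point; the point
    is only needed because measurable types are pointed in the library). *)
#[short(type="pmetricType")]
HB.structure Definition PointedMetric (K : numDomainType) :=
  { M of Metric K M & Pointed M }.

Definition borel (T : ptopologicalType) := g_sigma_algebraType (@open T).

Section Projective.
Variables (R : realType) (n : nat).

Notation nzvec := (set_type [set v : 'cV[R]_n.+1 | v != 0]).

Definition proportional (v w : nzvec) : bool :=
  `[< exists c : R, c != 0 /\ val w = c *: val v >].

Lemma proportional_refl : reflexive proportional.
Proof.
move=> v; apply/asboolP; exists 1; split; first exact: oner_neq0.
by rewrite scale1r.
Qed.

Lemma proportional_sym : symmetric proportional.
Proof.
move=> v w; apply/asboolP/asboolP => -[c [c0 e]]; exists c^-1;
  (split; first by rewrite invr_eq0);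
  by rewrite e scalerA mulVf // scale1r.
Qed.

Lemma proportional_trans : transitive proportional.
Proof.
move=> v u w /asboolP[c [c0 e1]] /asboolP[d [d0 e2]]; apply/asboolP.
exists (d * c); split; first by rewrite mulf_neq0.
by rewrite e2 e1 scalerA.
Qed.

Canonical proportional_equiv :=
  EquivRel proportional proportional_refl proportional_sym proportional_trans.

Definition projsp : Type :=
  quotient_topology {eq_quot proportional_equiv}%qT.
HB.instance Definition _ := Topological.on projsp.
HB.instance Definition _ := Quotient.on projsp.

End Projective.

Local Open Scope quotient_scope.

Section Projective2.
Variables (R : realType) (n : nat).

Local Notation nzvec := (set_type [set v : 'cV[R]_n.+1 | v != 0]).

Lemma e0_neq0 : (delta_mx 0 0 : 'cV[R]_n.+1) \in [set v : 'cV[R]_n.+1 | v != 0].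
Proof.
rewrite inE /=; apply/eqP => /matrixP /(_ 0 0); rewrite !mxE eqxx /=.
by move/eqP; rewrite oner_eq0.
Qed.

Definition e0 : nzvec := exist (fun v => v \in [set v : 'cV[R]_n.+1 | v != 0]) (delta_mx 0 0) e0_neq0.

HB.instance Definition _ := isPointed.Build (projsp R n) (\pi e0).

Definition phat (v : nzvec) : projsp R n := \pi v.

(** action of a matrix M on nonzero vectors: v |-> M v
    (well defined, i.e. nonzero, whenever M is invertible; the default
    value v is only used when M v = 0) *)
Definition nzact (M : 'M[R]_n.+1) (v : nzvec) : nzvec :=
  insubd v (M *m val v).

Definition pact (M : 'M[R]_n.+1) (p : projsp R n) : projsp R n :=
  phat (nzact M (repr p)).

End Projective2.

Section Markov.
Local Open Scope ereal_scope.
Context {R : realType}.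

Definition stationary {d} {T : measurableType d}
    (P : T -> set T -> \bar R) (nu : {measure set T -> \bar R}) : Prop :=
  forall E, measurable E -> nu E = \int[nu]_z P z E.

Fixpoint kiter {d} {T : measurableType d}
    (K : T -> {measure set T -> \bar R}) (k : nat) (x : T) (E : set T) : \bar R :=
  if k is k'.+1 then \int[K x]_y kiter K k' y E else \d_x E.

(** uniform ergodicity: ||K^k_x - mu||_TV <= C sigma^k, the total variation
    norm being sup_E |K^k_x(E) - mu(E)| over measurable E *)
Definition uniformly_ergodic {d} {T : measurableType d}
    (K : T -> {measure set T -> \bar R}) : Prop :=
  exists (mu : probability T R) (C sigma : R),
    (0 < sigma < 1)%R /\
    forall k x E, measurable E ->
      (`| fine (kiter K k x E) - fine (mu E) | <= C * sigma ^+ k)%R.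

Definition weak_continuous (S : pmetricType R)
    (K : borel S -> {measure set (borel S) -> \bar R}) : Prop :=
  forall f : S -> R, continuous f ->
    continuous (fun x : S => fine (\int[K x]_y (f y)%:E)).

Context {d : measure_display} {X : measurableType d} {n : nat}.
Local Notation P := (borel (projsp R n)).

(** Kbar(w1, (w0, v)) = law of (w2, (w1, A(w1,w0) v)) with w2 ~ K_{w1} *)
Definition Kbar (K : X -> {measure set X -> \bar R}) (A : X -> X -> 'M[R]_n.+1)
    (z : X * (X * P)) (E : set (X * (X * P))) : \bar R :=
  K z.1 ((fun w => (w, (z.1, pact (A z.1 z.2.1) z.2.2))) @^-1` E).

(** K_A(w0, v) = law of (w1, A(w1,w0) v) with w1 ~ K_{w0} *)
Definition KA (K : X -> {measure set X -> \bar R}) (A : X -> X -> 'M[R]_n.+1)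
    (z : X * P) (E : set (X * P)) : \bar R :=
  K z.1 ((fun w => (w, pact (A w z.1) z.2)) @^-1` E).

Definition ltimes {d'} {Y : measurableType d'} (K : X -> {measure set X -> \bar R})
    (eta : {measure set (X * Y) -> \bar R}) (E : set (X * (X * Y))) : \bar R :=
  \int[eta]_z K z.1 ((fun w => (w, z)) @^-1` E).

End Markov.

(* Put phi (w1, w0, v) := (w1, A(w1, w0) v).  Then Kbar(z) = K ⋉ delta_(phi z),
   so the stationarity of m reads m = \int K ⋉ delta_(phi z) dm(z) = K ⋉ eta
   with eta := phi_* m; pushing m = K ⋉ eta forward by phi shows that eta is
   K_A-stationary; and eta is the marginal of K ⋉ eta on its last two
   coordinates, whence uniqueness.
   The only technical point is the measurability of phi for the product
   sigma-algebra: (M, v) |-> M v is jointly continuous on GL x P(R^m), and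
   rational balls form a countable base of the matrices, so the preimage of
   an open set is a countable union of measurable rectangles. *)

From HB Require Import structures.
From mathcomp Require Import all_boot all_order all_algebra generic_quotient.
From mathcomp Require Import all_classical all_reals all_analysis.
From mathcomp Require Import measurable_realfun.
Import numFieldTopology.Exports.

Set Implicit Arguments.
Unset Strict Implicit.
Unset Printing Implicit Defensive.

Import Order.TTheory GRing.Theory Num.Theory.
Local Open Scope classical_set_scope.
Local Open Scope ring_scope.

Section mx_continuity.
Variable R : realType.

Lemma mx_continuous (T : topologicalType) k l (f : T -> 'M[R]_(k, l)) :
  (forall i j, continuous (fun x => f x i j)) -> continuous f.
Proof.
move=> fc x A /= /nbhs_ballP[e e0 eA].
have : \forall y \near x, forall i j, ball (f x i j) e (f y i j).
  do 2 apply: filter_forall => ?; exact: fc _ _ x _ (nbhsx_ballx _ _ e0).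
by apply: filterS => y fy; apply: eA.
Qed.

Lemma mulmx_continuous k l p :
  continuous (fun AB : 'M[R]_(k, l) * 'M[R]_(l, p) => AB.1 *m AB.2).
Proof.
apply: mx_continuous => i j; under eq_fun do rewrite mxE.
apply: continuous_big => [|h _]; first exact: add_continuous.
move=> AB; apply: continuousM.
- apply: (continuous_comp (f := fst) (g := fun M : 'M[R]_(k, l) => M i h)).
    exact: cvg_fst.
  exact: coord_continuous.
- apply: (continuous_comp (f := snd) (g := fun M : 'M[R]_(l, p) => M h j)).
    exact: cvg_snd.
  exact: coord_continuous.
Qed.

Lemma rat_mx_ball_approx k l (M : 'M[R]_(k, l)) (e : R) : 0 < e ->
  exists Q : 'M[rat]_(k, l) * nat,
    ball (map_mx (@ratr R) Q.1) (Q.2.+1%:R^-1 : R) M /\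
    ball (map_mx (@ratr R) Q.1) (Q.2.+1%:R^-1 : R) `<=` ball M e.
Proof.
move=> e0; set N := Num.truncn (2 / e).
have r0 : 0 < N.+1%:R^-1 :> R by rewrite invr_gt0.
have hQ i j :
    exists q : rat, ratr q \in `](M i j - N.+1%:R^-1), (M i j + N.+1%:R^-1)[.
  by apply: rat_in_itvoo; rewrite ltrBlDr -addrA ltrDl addr_gt0.
pose Q := \matrix_(i, j) projT1 (cid (hQ i j)).
have QM : ball (map_mx (@ratr R) Q) (N.+1%:R^-1 : R) M.
  split => // i j; rewrite /ball /= !mxE.
  by rewrite distrC ltr_distlC; move: (projT2 (cid (hQ i j))); rewrite in_itv.
exists (Q, N) => /=; split => // M' QM'.
apply: le_ball (ball_triangle (ball_sym QM) QM').
have := truncnS_gt (2 / e); rewrite -/N ltr_pdivrMr // => lt2.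
by rewrite -mulr2n -[_ *+ 2]mulr_natl ler_pdivrMr // mulrC ltW.
Qed.

End mx_continuity.

Section projective_action.
Variables (R : realType) (n : nat).
Local Notation nzvec := (set_type [set v : 'cV[R]_n.+1 | v != 0]).
Local Notation P := (projsp R n).

Lemma phat_eqP (u w : nzvec) :
  reflect (exists2 c : R, c != 0 & val w = c *: val u) (phat u == phat w).
Proof.
apply: (iffP eqP) => [/eqmodP/asboolP[c [c0 e]] | [c c0 e]]; first by exists c.
by apply/eqmodP/asboolP; exists c.
Qed.

Lemma scale_nzvec (u : nzvec) (c : R) : c != 0 ->
  exists2 w : nzvec, val w = c *: val u & phat w = phat u.
Proof.
move=> c0; have cu : c *: val u \in [set v : 'cV[R]_n.+1 | v != 0].
  by rewrite inE /= scaler_eq0 negb_or c0; have := valP u; rewrite inE.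
exists (exist (fun v => v \in [set v : 'cV[R]_n.+1 | v != 0]) _ cu) => //.
apply/eqP/phat_eqP; exists c^-1; rewrite ?invr_eq0 //=.
by rewrite scalerA mulVf // scale1r.
Qed.

Lemma nzactE (M : 'M[R]_n.+1) (v : nzvec) :
  M \in unitmx -> val (nzact M v) = M *m val v.
Proof.
move=> Mu; rewrite /nzact insubdK // inE /=.
apply: contraTneq (valP v) => /(congr1 (mulmx (invmx M))).
by rewrite mulKmx // mulmx0 notin_setE /= => ->; rewrite eqxx.
Qed.

Lemma pactE (M : 'M[R]_n.+1) (u : nzvec) :
  M \in unitmx -> pact M (phat u) = phat (nzact M u).
Proof.
move=> Mu; have /phat_eqP[c c0 e] : phat u == phat (repr (phat u)).
  by rewrite /phat reprK.
apply/eqP/phat_eqP; exists c^-1; rewrite ?invr_eq0 // !nzactE // e.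
by rewrite -scalemxAr scalerA mulVf // scale1r.
Qed.

Lemma open_projspP (U : set P) : open U <->
  exists2 W : set 'cV[R]_n.+1, open W &
    forall u : nzvec, W (val u) <-> U (phat u).
Proof.
split => [[W oW eW] | [W oW eW]]; exists W => //.
  by move=> u; have := congr1 (fun S => S u) eW => /= ->.
by apply/funext => u /=; apply/propext; exact: eW.
Qed.

Lemma open_phat_ball (v : nzvec) (e : R) :
  open (@phat R n @` [set u : nzvec | ball (val v) e (val u)]).
Proof.
apply/open_projspP.
exists (\bigcup_(c in [set c : R | c != 0])
  (fun x => c *: x) @^-1` ball (val v) e).
  apply: bigcup_open => c _.
  move/continuousP: (@scaler_continuous R 'cV[R]_n.+1 c).
  by apply; exact: ball_open.
move=> u; split => [[c c0 /= vcu] | [w vw /eqP/phat_eqP[c c0 e']]].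
  by have [w wcu <-] := scale_nzvec u c0; exists w; rewrite //= wcu.
by exists c^-1; rewrite /= ?invr_eq0 // e' scalerA mulVf // scale1r.
Qed.

Lemma pact_continuous (M : 'M[R]_n.+1) (p : P) (U : set P) :
  M \in unitmx -> open U -> U (pact M p) ->
  exists2 e : R, 0 < e & exists2 N : set P, open_nbhs p N &
    forall M' q, M' \in unitmx -> ball M e M' -> N q -> U (pact M' q).
Proof.
move=> Mu oU Up; have [W oW WU] := (open_projspP U).1 oU.
set v := repr p; have pv : p = phat v by rewrite /phat reprK.
have WMv : W (M *m val v) by rewrite -nzactE // WU -pactE // -pv.
have : nbhs (M, val v) ((fun AB => AB.1 *m AB.2) @^-1` W).
  by apply: mulmx_continuous; exact: open_nbhs_nbhs.
move=> /nbhs_ballP[e e0 eW]; exists e => //.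
exists (@phat R n @` [set u : nzvec | ball (val v) e (val u)]).
  by split; [exact: open_phat_ball | exists v => //; exact: ballxx].
move=> M' _ M'u MM' [u vu <-]; rewrite pactE // -WU nzactE //.
exact: (eW (M', val u)).
Qed.

End projective_action.

Lemma measurable_preimage_mx_ball d (T : measurableType d) (R : realType) k l
    (B : T -> 'M[R]_(k, l)) (Q : 'M[R]_(k, l)) (r : R) :
  (forall i j, measurable_fun setT (fun t => B t i j)) ->
  measurable (B @^-1` ball Q r).
Proof.
move=> Bm; have [r0|r0] := ltP 0 r; last first.
  rewrite (_ : _ @^-1` _ = set0) //; apply/seteqP; split => t //= [].
  by move=> /lt_le_trans/(_ r0); rewrite ltxx.
have -> : B @^-1` ball Q r = \bigcap_(ij in [set: 'I_k * 'I_l])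
    ((fun t => B t ij.1 ij.2) @^-1` ball (Q ij.1 ij.2) r).
  apply/seteqP; split => [t [_ Bt] ij _ | t Bt]; first exact: Bt.
  by split => // i j; exact: Bt (i, j) I.
apply: fin_bigcap_measurable; first exact: finite_finset.
move=> ij _; rewrite -[A in measurable A]setTI; apply: Bm => //.
exact: measurable_ball.
Qed.

Lemma measurable_fun_pact (R : realType) (n : nat) d (T : measurableType d)
    (B : T -> 'M[R]_n.+1) (f : T -> borel (projsp R n)) :
  (forall t, B t \in unitmx) ->
  (forall i j, measurable_fun setT (fun t => B t i j)) ->
  measurable_fun setT f ->
  measurable_fun setT (fun t => pact (B t) (f t) : borel (projsp R n)).
Proof.
move=> Bu Bm mf.
apply: (@measurability _ _ _ (borel (projsp R n)) setT _ (@open _)) => //.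
move=> _ [U oU <-]; rewrite setTI.
pose rball (Q : 'M[rat]_n.+1 * nat) :=
  ball (map_mx (@ratr R) Q.1) (Q.2.+1%:R^-1 : R).
pose good Q := [set p | forall M, M \in unitmx -> rball Q M -> U (pact M p)].
have -> : (fun t => pact (B t) (f t)) @^-1` U =
    \bigcup_Q (B @^-1` rball Q `&` f @^-1` (good Q)°).
  apply/seteqP; split => [t /= Ut | t [Q _ [/= BQ fQ]]]; last first.
    exact: (interior_subset fQ) (Bu t) BQ.
  have [e e0 [N [oN Nf] NU]] := pact_continuous (Bu t) oU Ut.
  have [Q [BQ Qe]] := rat_mx_ball_approx (B t) e0.
  exists Q => //; split => //=.
  apply: filterS (open_nbhs_nbhs (conj oN Nf)) => q Nq M Mu QM.
  exact: NU Mu (Qe _ QM) Nq.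
apply: countable_bigcupT_measurable => // Q.
apply: measurableI; first exact: measurable_preimage_mx_ball.
rewrite -[A in measurable A]setTI; apply: mf => //.
by apply: sub_sigma_algebra; exact: open_interior.
Qed.

Section disintegration.
Local Open Scope ereal_scope.
Context {R : realType} {d d' : measure_display} {X : measurableType d}
  {Y : measurableType d'} (K : R.-pker X ~> X).

Definition kfst (y : (X * Y)%type) : {measure set X -> \bar R} := K y.1.

Lemma measurable_fun_kfst U : measurable U -> measurable_fun setT (kfst ^~ U).
Proof.
by move=> mU; exact: measurableT_comp (measurable_kernel K U mU) measurable_fst.
Qed.

HB.instance Definition _ := isKernel.Build _ _ _ _ R kfst measurable_fun_kfst.

Lemma kfst_setT y : kfst y [set: X] = 1.
Proof. exact: prob_kernel. Qed.

HB.instance Definition _ := Kernel_isProbability.Build _ _ _ _ R kfst kfst_setT.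

Lemma measurable_fun_ltimes_section (E : set (X * (X * Y))%type) :
  measurable E -> measurable_fun setT
    (fun y : (X * Y)%type => K y.1 ((fun w => (w, y)) @^-1` E)).
Proof.
move=> mE; have mE' : measurable [set p : ((X * Y) * X)%type | E (p.2, p.1)].
  rewrite -[A in measurable A]setTI; apply: (_ : measurable_fun _ _) => //.
  exact: measurable_fun_pair measurable_snd measurable_fst.
have := measurable_fun_xsection_finite_kernel kfst (mem_set mE').
congr measurable_fun; apply/funext => y; congr (K y.1 _).
by apply/seteqP; split => w; rewrite /xsection /= inE.
Qed.

Lemma ltimes_setTX (eta : probability (X * Y)%type R) F : measurable F ->
  ltimes K eta (setT `*` F) = eta F.
Proof.
move=> mF; transitivity (\int[eta]_y (\1_F y)%:E); last first.
  by rewrite integral_indic // setIT.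
apply: eq_integral => y _.
rewrite indicE; have [yF|yF] := boolP (y \in F).
  rewrite (_ : _ @^-1` _ = setT) ?prob_kernel //.
  by apply/seteqP; split => w //= _; split => //; rewrite inE in yF.
rewrite (_ : _ @^-1` _ = set0) ?measure0 //.
by apply/seteqP; split => w //= [_]; rewrite -inE => /(negP yF).
Qed.

Lemma ltimes_inj (eta eta' : probability (X * Y)%type R) :
  (forall E, measurable E -> ltimes K eta E = ltimes K eta' E) ->
  forall F, measurable F -> eta F = eta' F.
Proof.
by move=> e F mF; rewrite -!ltimes_setTX // e //; exact: measurableX.
Qed.

Variables (phi : (X * (X * Y))%type -> (X * Y)%type)
  (m : probability (X * (X * Y))%type R).
Hypothesis mphi : measurable_fun setT phi.
Local Notation eta := (distribution m (mfun_Sub (mem_set mphi))).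

(* The kernel z |-> K ⋉ delta_(phi z); for the phi of the header it is
   [Kbar K A], and the kernel in [distribution_stationary] is [KA K A]. *)
Hypothesis m_stationary :
  stationary (fun z E => K (phi z).1 ((fun w => (w, phi z)) @^-1` E)) m.

Lemma stationary_ltimes_distribution E : measurable E -> m E = ltimes K eta E.
Proof.
move=> mE; rewrite m_stationary // /ltimes ge0_integral_pushforward //.
exact: (measurable_fun_ltimes_section mE).
Qed.

Lemma distribution_stationary :
  stationary (fun y F => K y.1 ((fun w => phi (w, y)) @^-1` F)) eta.
Proof.
move=> F mF; rewrite [LHS]stationary_ltimes_distribution //.
by rewrite -[A in measurable A]setTI; exact: mphi.
Qed.

End disintegration.

Theorem proposition2p3 (R : realType) (S : pmetricType R) (n : nat)
    (K : R.-pker (borel S) ~> (borel S))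
    (A : S -> S -> 'M[R]_n.+1)
    (m : probability (borel S * (borel S * borel (projsp R n))%type)%type R) :
  compact [set: S] ->
  weak_continuous K ->
  uniformly_ergodic K ->
  (forall y x, A y x \in unitmx) ->
  (forall i j, measurable_fun [set: (borel S * borel S)%type]
                 (fun z : (borel S * borel S)%type => A z.1 z.2 i j)) ->
  stationary (Kbar K A) m ->
  exists eta : probability (borel S * borel (projsp R n))%type R,
    [/\ (forall E, measurable E -> m E = ltimes K eta E),
        stationary (KA K A) eta
      & forall eta' : probability (borel S * borel (projsp R n))%type R,
          (forall E, measurable E -> m E = ltimes K eta' E) ->
          forall E, measurable E -> eta' E = eta E].
Proof.
move=> _ _ _ Au Am m_stationary.
pose phi (z : (borel S * (borel S * borel (projsp R n)))%type) :
  (borel S * borel (projsp R n))%type := (z.1, pact (A z.1 z.2.1) z.2.2).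
have mphi : measurable_fun setT phi.
  apply: measurable_fun_pair => //.
  have mA i j : measurable_fun setT
      (fun z : (borel S * (borel S * borel (projsp R n)))%type =>
         A z.1 z.2.1 i j).
    exact: (measurableT_comp (Am i j) (measurable_fun_pair measurable_fst
      (measurableT_comp measurable_fst measurable_snd))).
  have msnd2 : measurable_fun setT
      (fun z : (borel S * (borel S * borel (projsp R n)))%type => z.2.2).
    exact: measurableT_comp measurable_snd measurable_snd.
  exact: measurable_fun_pact
    (fun z : (borel S * (borel S * borel (projsp R n)))%type =>
       Au z.1 z.2.1) mA msnd2.
have m_eta := stationary_ltimes_distribution mphi m_stationary.
exists (distribution m (mfun_Sub (mem_set mphi))); split.
- exact: m_eta.
- rewrite /KA; exact: distribution_stationary mphi m_stationary.
- move=> eta' m_eta' E mE; apply: (ltimes_inj (K := K)) mE => F mF.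
  by rewrite -m_eta' // m_eta.
Qed.
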